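(* Let $\eta\in(0,1)$, $T\ge 1$, and let $\ell_1,\dots,\ell_T\in[-1,1]^K$ be an arbitrary loss sequence fixed in advance. Then LB-Prod (defined in the context) produces, at every round $t$, a probability vector $\pi_t$ in the simplex with all entries strictly positive, and for every $i^*\in[K]$, $$\sum_{t=1}^T\mathbb{E}\big[\ell_{t,A_t}-\ell_{t,i^*}\big]\le 2+\frac{K\log T}{\eta}+\frac{2\eta T}{1-\eta}.$$
   Context: Bandit setting: in each round $t$ the learner picks $A_t\in[K]$ and observes only $\ell_{t,A_t}$; expectations are over the learner's randomness. LB-Prod with parameter $\eta\in(0,1)$: set $\pi_{1,i}=1/K$. In round $t$: draw $A_t\sim\pi_t$, observe $\ell_{t,A_t}$; set $\tilde\ell_{t,i}=\ell_{t,i}\mathbb{I}(A_t=i)$; $$\lambda_{t,i}=\frac{\pi_{t,i}\sum_{j=1}^K\pi_{t,j}\tilde\ell_{t,j}}{\sum_{j=1}^K\pi_{t,j}^2}=\frac{\pi_{t,i}\pi_{t,A_t}\ell_{t,A_t}}{\sum_{j=1}^K\pi_{t,j}^2};$$ and update $\pi_{t+1,i}=\pi_{t,i}\big(1-\eta(\tilde\ell_{t,i}-\lambda_{t,i})\big)$ for all $i\in[K]$. *)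

From HB Require Import structures.
From mathcomp Require Import all_boot all_order all_algebra.
From mathcomp Require Import reals exp.
Set Implicit Arguments. Unset Strict Implicit. Unset Printing Implicit Defensive.
Import Order.TTheory GRing.Theory Num.Theory.
Local Open Scope ring_scope.

Section LBProd.
Variables (R : realType) (K : nat) (eta : R) (loss : nat -> 'I_K -> R).

Definition lb_init : 'I_K -> R := fun _ => (K%:R)^-1.

Definition lb_update (t : nat) (p : 'I_K -> R) (a : 'I_K) : 'I_K -> R :=
  let ltil := fun j : 'I_K => if a == j then loss t j else 0 in
  let lam := fun i : 'I_K =>
    p i * (\sum_(j < K) p j * ltil j) / (\sum_(j < K) p j ^+ 2) in
  fun i => p i * (1 - eta * (ltil i - lam i)).

Fixpoint lb_pi_from (t0 : nat) (p : 'I_K -> R) (h : seq 'I_K) : 'I_K -> R :=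
  match h with
  | [::] => p
  | a :: h' => lb_pi_from t0.+1 (lb_update t0 p a) h'
  end.

(* pi_t as a function of the history (A_1,...,A_{t-1}), t = size h + 1. *)
Definition lb_pi (h : seq 'I_K) : 'I_K -> R := lb_pi_from 1 lb_init h.

Fixpoint lb_prob_from (t0 : nat) (p : 'I_K -> R) (h : seq 'I_K) : R :=
  match h with
  | [::] => 1
  | a :: h' => p a * lb_prob_from t0.+1 (lb_update t0 p a) h'
  end.

Definition lb_prob (h : seq 'I_K) : R := lb_prob_from 1 lb_init h.

(* E[ l_{t,A_t} - l_{t,istar} ] at round t = n.+1 (n < T), as an explicit
   expectation over the histories (A_1,...,A_{n+1}). *)
Definition lb_round_regret (n : nat) (istar : 'I_K) : R :=
  \sum_(h : (n.+1).-tuple 'I_K)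
     lb_prob h * (loss n.+1 (tnth h ord_max) - loss n.+1 istar).

Definition lb_expected_regret (T : nat) (istar : 'I_K) : R :=
  \sum_(n < T) lb_round_regret n istar.

End LBProd.

(* LB-Prod is online mirror descent with the log-barrier.  For a comparator [u]
   in the open simplex, the potential [barrier u p = \sum_i (u_i / p_i + ln p_i)]
   decreases in expectation over [A_t ~ p] by at least [eta] times the regret
   against [u], up to [2 eta^2 / (1 - eta)]: expanding [ln (1 - x) <= -x] and
   [1 / (1 - x) <= 1 + x + x^2 / (1 - eta)] makes the first-order term exactly the
   regret, and the second-order term is the variance [\sum_i u_i z_i^2 / p_i] of the
   centred losses [z], whose expectation is at most 2.  Telescoping over [T] rounds
   and choosing [u = (1 - 1/T) e_{i*} + 1/(K T)], whose initial potential gap is at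
   most [K ln T] and whose loss is within [2/T] of that of [i*] in each round,
   gives the bound. *)

From HB Require Import structures.
From mathcomp Require Import all_boot all_order all_algebra.
From mathcomp Require Import reals exp.
From mathcomp Require Import ring lra zify.
Import Order.TTheory GRing.Theory Num.Theory.
Local Open Scope ring_scope.
Set Implicit Arguments. Unset Strict Implicit.

Lemma big_tuple_cons (V : nmodType) (T : finType) n (F : n.+1.-tuple T -> V) :
  \sum_(h : n.+1.-tuple T) F h =
  \sum_(x : T) \sum_(h : n.-tuple T) F [tuple of x :: h].
Proof.
rewrite pair_big /= (reindex (fun p : T * n.-tuple T => [tuple of p.1 :: p.2])) //.
exists (fun h : n.+1.-tuple T => (thead h, [tuple of behead h])).
  by move=> [x h] _; congr pair; apply: val_inj.
by move=> h _; rewrite -tuple_eta.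
Qed.

Lemma big_tuple0 (V : nmodType) (T : finType) (F : 0.-tuple T -> V) :
  \sum_(h : 0.-tuple T) F h = F [tuple].
Proof. by rewrite (big_pred1 [tuple]) // => h; apply/esym/eqP/tuple0. Qed.

Lemma tnth_cons_max (T : Type) n x (h : n.+1.-tuple T) :
  tnth [tuple of x :: h] ord_max = tnth h ord_max.
Proof. by rewrite (_ : ord_max = lift ord0 ord_max) ?tnthS //; apply: val_inj. Qed.

Lemma ln_le_subr1 (R : realType) (x : R) : 0 < x -> ln x <= x - 1.
Proof.
by move=> x0; have := @le_ln1Dx R (x - 1); rewrite addrCA subrr addr0; apply; lra.
Qed.

Lemma invr_1B_le (R : realType) (c x : R) : c < 1 -> x <= c ->
  (1 - x)^-1 <= 1 + x + x ^+ 2 / (1 - c).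
Proof.
move=> c1 xc; have x1 : 0 < 1 - x by lra.
have -> : (1 - x)^-1 = 1 + x + x ^+ 2 / (1 - x) by field; rewrite gt_eqF.
by rewrite lerD2l ler_wpM2l ?sqr_ge0 // lef_pV2 ?posrE; lra.
Qed.

Section Simplex.
Variables (R : realType) (K : nat).
Implicit Types (p u : 'I_K -> R) (i j a : 'I_K).

Definition pos_distr p := (forall i, 0 < p i) /\ \sum_i p i = 1.

Definition sqnorm p := \sum_j p j ^+ 2.

Lemma sqr_le_sqnorm p a : p a ^+ 2 <= sqnorm p.
Proof. by rewrite /sqnorm (bigD1 a) //= lerDl sumr_ge0 // => j _; exact: sqr_ge0. Qed.

Lemma mul_le_sqnorm p i a : p i * p a <= sqnorm p.
Proof.
have := sqr_le_sqnorm p i; have := sqr_le_sqnorm p a; have := sqr_ge0 (p i - p a).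
rewrite !expr2; nra.
Qed.

Lemma sqnorm_gt0 p a : (forall i, 0 < p i) -> 0 < sqnorm p.
Proof. by move=> pp; apply: lt_le_trans (sqr_le_sqnorm p a); exact: exprn_gt0. Qed.

Lemma sum_mul_indicator (f g : 'I_K -> R) a :
  \sum_j f j * (if a == j then g j else 0) = f a * g a.
Proof.
rewrite (bigD1 a) //= eqxx big1 ?addr0 // => j /negbTE.
by rewrite eq_sym => ->; rewrite mulr0.
Qed.

End Simplex.

Section LBProdUpdate.
Variables (R : realType) (K : nat) (eta : R) (loss : nat -> 'I_K -> R).
Implicit Types (p u : 'I_K -> R) (i j a : 'I_K).

Lemma lb_init_pos_distr : (0 < K)%N -> pos_distr (@lb_init R K).
Proof.
move=> hK; have K0 : 0 < K%:R :> R by rewrite ltr0n.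
split=> [i|]; first by rewrite invr_gt0.
by rewrite sumr_const card_ord -[_ *+ _]mulr_natr mulVf ?lt0r_neq0.
Qed.

(* The paper's [tilde l_{t,i} - lambda_{t,i}] in a round where [A_t = a]. *)
Definition centered_loss t p a i :=
  ((if a == i then 1 else 0) - p i * p a / sqnorm p) * loss t a.

Lemma lb_updateE t p a i :
  lb_update eta loss t p a i = p i * (1 - eta * centered_loss t p a i).
Proof.
rewrite /lb_update /centered_loss /= sum_mul_indicator -/(sqnorm p).
by move: (sqnorm p)^-1 => N; case: eqP => [->|_]; ring.
Qed.

Lemma centered_loss_le1 t p a i : (forall j, 0 < p j) -> -1 <= loss t a <= 1 ->
  centered_loss t p a i <= 1.
Proof.
move=> pp /andP[la1 la2]; have M0 := sqnorm_gt0 a pp.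
have r0 : 0 <= p i * p a / sqnorm p by rewrite divr_ge0 ?mulr_ge0 ?ltW.
have r1 : p i * p a / sqnorm p <= 1 by rewrite ler_pdivrMr // mul1r mul_le_sqnorm.
rewrite /centered_loss; case: eqP => _; nra.
Qed.

Lemma sum_mul_centered_loss t p a : (forall j, 0 < p j) ->
  \sum_i p i * centered_loss t p a i = 0.
Proof.
move=> pp; have M0 := sqnorm_gt0 a pp.
rewrite /centered_loss (eq_bigr (fun i => (p i * (if a == i then 1 else 0)
  - p i ^+ 2 * (p a / sqnorm p)) * loss t a)); last first.
  by move=> i _; move: (if _ then _ else _) => d; ring.
rewrite -mulr_suml sumrB sum_mul_indicator -mulr_suml mulr1.
by rewrite mulrCA divff ?gt_eqF // mulr1 subrr mul0r.
Qed.

Definition bounded_losses t0 n :=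
  forall t, (t0 <= t < t0 + n)%N -> forall i, -1 <= loss t i <= 1.

Lemma bounded_lossesS t0 n : bounded_losses t0 n.+1 ->
  (forall i, -1 <= loss t0 i <= 1) /\ bounded_losses t0.+1 n.
Proof. by move=> hb; split=> [|t /andP[? ?]]; apply: hb; apply/andP; split; lia. Qed.

Lemma bounded_losses_le t0 m n : (n <= m)%N -> bounded_losses t0 m ->
  bounded_losses t0 n.
Proof. by move=> nm hb t /andP[? ?]; apply: hb; apply/andP; split; lia. Qed.

Hypothesis heta : 0 < eta < 1.

Lemma lb_update_pos_distr t p a : pos_distr p -> -1 <= loss t a <= 1 ->
  pos_distr (lb_update eta loss t p a).
Proof.
move=> [pp sp] hl; have /andP[e0 e1] := heta; split=> [i|].
  by rewrite lb_updateE mulr_gt0 //; have := centered_loss_le1 i pp hl; nra.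
under eq_bigr => i _ do rewrite lb_updateE mulrBr mulr1 mulrCA.
by rewrite sumrB -mulr_sumr sum_mul_centered_loss // mulr0 subr0.
Qed.

Lemma lb_pi_from_pos_distr h : forall t0 p, pos_distr p ->
  bounded_losses t0 (size h) -> pos_distr (lb_pi_from eta loss t0 p h).
Proof.
elim: h => [|a h IH] t0 p pd // /(@bounded_lossesS _ (size h))[hl hb].
exact/IH/hb/lb_update_pos_distr.
Qed.

Lemma lb_prob_from_sum1 n : forall t0 p, pos_distr p -> bounded_losses t0 n ->
  \sum_(h : n.-tuple 'I_K) lb_prob_from eta loss t0 p h = 1.
Proof.
elim: n => [|n IH] t0 p pd; first by rewrite big_tuple0.
move=> /bounded_lossesS[hl hb]; rewrite big_tuple_cons -[RHS]pd.2.
apply: eq_bigr => a _ /=.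
by rewrite -mulr_sumr IH ?mulr1 //; exact: lb_update_pos_distr.
Qed.

End LBProdUpdate.

Lemma barrier_term_le (R : realType) (c u p z : R) : 0 < c < 1 -> 0 <= u -> 0 < p ->
  z <= 1 ->
  u / (p * (1 - c * z)) + ln (p * (1 - c * z)) <=
  u / p + ln p + u / p * (c * z + (c * z) ^+ 2 / (1 - c)) - c * z.
Proof.
move=> /andP[c0 c1] u0 p0 z1; have q0 : 0 < 1 - c * z by nra.
have hln : ln (1 - c * z) <= - (c * z) by have := ln_le_subr1 q0; lra.
have hinv := @invr_1B_le R c (c * z) c1 ltac:(nra).
have up : 0 <= u / p by rewrite divr_ge0 // ltW.
rewrite lnM ?posrE // invfM mulrA.
have := ler_wpM2l up hinv; lra.
Qed.

Section Barrier.
Variables (R : realType) (K : nat) (eta : R) (loss : nat -> 'I_K -> R).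
Implicit Types (p u : 'I_K -> R) (i j a : 'I_K).

(* Exceeds its minimum [\sum_i (1 + ln u_i)] over [p] by the log-barrier
   Bregman divergence of [u] from [p]. *)
Definition barrier u p := \sum_i (u i / p i + ln (p i)).

Lemma sum_weighted_centered_loss t u p a : pos_distr u -> pos_distr p ->
  \sum_i (u i / p i - 1) * centered_loss loss t p a i
    = u a * loss t a / p a - loss t a.
Proof.
move=> [_ su] [pp sp]; have M0 := lt0r_neq0 (sqnorm_gt0 a pp).
rewrite /centered_loss.
rewrite (eq_bigr (fun i => ((u i / p i - 1) * (if a == i then 1 else 0)
  - (u i - p i) * (p a / sqnorm p)) * loss t a)); last first.
  move=> i _ /=; have := pp i; move: (if _ then _ else _) => d /lt0r_neq0 pi0.
  by field; rewrite M0 pi0.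
rewrite -mulr_suml sumrB sum_mul_indicator -mulr_suml sumrB su sp subrr mul0r.
by rewrite subr0 mulr1 mulrBl mul1r mulrAC.
Qed.

Lemma barrier_lb_update_le t u p a : 0 < eta < 1 -> pos_distr u -> pos_distr p ->
  -1 <= loss t a <= 1 ->
  barrier u (lb_update eta loss t p a) <= barrier u p
    + eta * (u a * loss t a / p a - loss t a)
    + eta ^+ 2 / (1 - eta) * \sum_i u i * centered_loss loss t p a i ^+ 2 / p i.
Proof.
move=> he ud pd hl; have [[up _] [pp _]] := (ud, pd).
have e1 : 1 - eta != 0 by case/andP: he => _ ?; rewrite lt0r_neq0 // subr_gt0.
rewrite /barrier; under eq_bigr => i _ do rewrite lb_updateE.
apply: le_trans (ler_sum _ (fun i _ => barrier_term_le he (ltW (up i)) (pp i)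
  (centered_loss_le1 i pp hl))) _.
rewrite -(sum_weighted_centered_loss t a ud pd) mulr_sumr !mulr_sumr -!big_split.
apply/ler_sum => i _ /=; have pi0 := lt0r_neq0 (pp i).
by rewrite le_eqVlt; apply/orP; left; apply/eqP; field; rewrite pi0 e1.
Qed.

Lemma centered_loss_sqr_le t p a i : (forall j, 0 < p j) -> -1 <= loss t a <= 1 ->
  p a * centered_loss loss t p a i ^+ 2 / p i
    <= (if a == i then 1 else 0) + p a ^+ 2 / sqnorm p.
Proof.
move=> pp /andP[l1 l2]; have M0 := sqnorm_gt0 a pp.
have pa0 := lt0r_neq0 (pp a); have pi0 := lt0r_neq0 (pp i).
have M0' := lt0r_neq0 M0.
have r0 : 0 <= p a ^+ 2 / sqnorm p by rewrite divr_ge0 ?sqr_ge0 ?ltW.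
have r1 : p a ^+ 2 / sqnorm p <= 1 by rewrite ler_pdivrMr // mul1r sqr_le_sqnorm.
have s0 : 0 <= p i * p a / sqnorm p by rewrite divr_ge0 ?mulr_ge0 ?ltW.
have s1 : p i * p a / sqnorm p <= 1 by rewrite ler_pdivrMr // mul1r mul_le_sqnorm.
have /andP[L0 L1] : 0 <= loss t a ^+ 2 <= 1 by rewrite sqr_ge0 /= expr2; nra.
rewrite /centered_loss; case: eqP => [<-|_].
  have -> : p a * (((1 - p a * p a / sqnorm p) * loss t a) ^+ 2) / p a =
    (1 - p a ^+ 2 / sqnorm p) ^+ 2 * loss t a ^+ 2 by field; rewrite M0' pa0.
  have /andP[q0 q1] : 0 <= (1 - p a ^+ 2 / sqnorm p) ^+ 2 <= 1.
    by rewrite sqr_ge0 /= expr2; nra.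
  by apply: le_trans (mulr_ile1 q0 L0 q1 L1) _; rewrite lerDl.
have -> : p a * (((0 - p i * p a / sqnorm p) * loss t a) ^+ 2) / p i =
  p i * p a / sqnorm p * loss t a ^+ 2 * (p a ^+ 2 / sqnorm p).
  by field; rewrite M0' pi0.
by rewrite add0r ler_piMl // mulr_ile1.
Qed.

Lemma expected_variance_le2 t u p : pos_distr u -> (forall j, 0 < p j) ->
  (forall a, -1 <= loss t a <= 1) ->
  \sum_a p a * \sum_i u i * centered_loss loss t p a i ^+ 2 / p i <= 2.
Proof.
move=> [up su] pp hl.
rewrite (eq_bigr (fun a =>
  \sum_i u i * (p a * centered_loss loss t p a i ^+ 2 / p i))).
  rewrite exchange_big /= -[2]mul1r -su mulr_suml; apply: ler_sum => i _.
  rewrite -mulr_sumr ler_pM2l //.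
  apply: le_trans (ler_sum _ (fun a _ => centered_loss_sqr_le i pp (hl a))) _.
  rewrite big_split /= -big_mkcond big_pred1_eq -mulr_suml divff; first lra.
  exact/lt0r_neq0/(sqnorm_gt0 i pp).
by move=> a _ /=; rewrite mulr_sumr; apply: eq_bigr => i _; ring.
Qed.

End Barrier.

Section Regret.
Variables (R : realType) (K : nat) (eta : R) (loss : nat -> 'I_K -> R).
Hypothesis heta : 0 < eta < 1.
Implicit Types (p u : 'I_K -> R) (i j a : 'I_K).

Definition excess_loss u t a := loss t a - \sum_i u i * loss t i.

Lemma expected_barrier_step t u p : pos_distr u -> pos_distr p ->
  (forall a, -1 <= loss t a <= 1) ->
  \sum_a p a * (excess_loss u t a + barrier u (lb_update eta loss t p a) / eta)
    <= barrier u p / eta + 2 * eta / (1 - eta).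
Proof.
move=> ud pd hl; have [pp sp] := pd; have /andP[e0 e1] := heta.
have e0' := lt0r_neq0 e0; have e1' : 1 - eta != 0 by rewrite lt0r_neq0 // subr_gt0.
set V := fun a => \sum_i u i * centered_loss loss t p a i ^+ 2 / p i.
set U := \sum_i u i * loss t i.
have step a : p a * (excess_loss u t a + barrier u (lb_update eta loss t p a) / eta)
    <= p a * (barrier u p / eta) + (u a * loss t a - p a * U)
       + eta / (1 - eta) * (p a * V a).
  have pa0 := lt0r_neq0 (pp a).
  have : barrier u (lb_update eta loss t p a) / eta <= barrier u p / eta
      + (u a * loss t a / p a - loss t a) + eta / (1 - eta) * V a.
    rewrite ler_pdivrMr //.
    apply: le_trans (barrier_lb_update_le heta ud pd (hl a)) _.
    rewrite le_eqVlt; apply/orP; left; apply/eqP.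
    by rewrite /V /=; field; rewrite e0' e1' pa0.
  rewrite -(lerD2l (excess_loss u t a)) -(ler_pM2l (pp a)) => /le_trans; apply.
  rewrite le_eqVlt; apply/orP; left; apply/eqP.
  by rewrite /excess_loss /U /V /=; field; rewrite e0' e1' pa0.
apply: le_trans (ler_sum _ (fun a _ => step a)) _.
rewrite !big_split /= sumrN -!mulr_suml sp !mul1r -/U subrr addr0 -mulr_sumr lerD2l.
rewrite (_ : 2 * eta / (1 - eta) = eta / (1 - eta) * 2); last by ring.
apply: ler_wpM2l; first by rewrite divr_ge0 ?subr_ge0 ?ltW.
exact: expected_variance_le2.
Qed.

Definition lb_expect_from (g : nat -> 'I_K -> R) t0 p n :=
  \sum_(h : n.+1.-tuple 'I_K)
     lb_prob_from eta loss t0 p h * g (t0 + n)%N (tnth h ord_max).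

Lemma lb_expect_from0 g t0 p : lb_expect_from g t0 p 0 = \sum_a p a * g t0 a.
Proof.
rewrite /lb_expect_from big_tuple_cons; apply: eq_bigr => a _.
by rewrite big_tuple0 /= mulr1 addn0.
Qed.

Lemma lb_expect_fromS g t0 p n : lb_expect_from g t0 p n.+1 =
  \sum_a p a * lb_expect_from g t0.+1 (lb_update eta loss t0 p a) n.
Proof.
rewrite /lb_expect_from big_tuple_cons; apply: eq_bigr => a _.
rewrite mulr_sumr; apply: eq_bigr => h _.
by rewrite tnth_cons_max /= addSnnS mulrA.
Qed.

Lemma barrier_ge u p : (forall i, 0 < u i) -> (forall i, 0 < p i) ->
  \sum_i (1 + ln (u i)) <= barrier u p.
Proof.
move=> up pp; apply: ler_sum => i _.
have := ln_le_subr1 (divr_gt0 (up i) (pp i)); rewrite ln_div ?posrE //; lra.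
Qed.

Lemma lb_expect_excess_loss_le u m : pos_distr u -> forall t0 p, pos_distr p ->
  bounded_losses loss t0 m ->
  \sum_(n < m) lb_expect_from (excess_loss u) t0 p n <=
    (barrier u p - \sum_i (1 + ln (u i))) / eta + m%:R * (2 * eta / (1 - eta)).
Proof.
move=> ud; have /andP[e0 e1] := heta.
set L := \sum_i (1 + ln (u i)); set C := 2 * eta / (1 - eta).
elim: m => [|m IH] t0 p pd.
  move=> _; rewrite big_ord0 mul0r addr0 divr_ge0 ?(ltW e0) // subr_ge0.
  exact: barrier_ge ud.1 pd.1.
move=> /bounded_lossesS[hl hb].
rewrite big_ord_recl lb_expect_from0.
rewrite (eq_bigr (fun n : 'I_m => \sum_a p a * lb_expect_from (excess_loss u) t0.+1
    (lb_update eta loss t0 p a) n)); last by move=> n _; exact: lb_expect_fromS.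
rewrite exchange_big /= -big_split /=.
apply: (le_trans (y := \sum_a (p a * (excess_loss u t0 a
    + barrier u (lb_update eta loss t0 p a) / eta) + p a * (m%:R * C - L / eta)))).
  apply: ler_sum => a _; rewrite -mulr_sumr -!mulrDr ler_pM2l; last exact: pd.1.
  have := IH _ _ (lb_update_pos_distr heta pd (hl a)) hb; rewrite mulrBl; lra.
rewrite big_split /= -mulr_suml pd.2 mul1r.
have := expected_barrier_step ud pd hl; rewrite -/C mulrSr mulrBl; lra.
Qed.

Lemma lb_round_regretE u n istar : (0 < K)%N -> bounded_losses loss 1 n.+1 ->
  lb_round_regret eta loss n istar
    = lb_expect_from (excess_loss u) 1 (@lb_init R K) n
    + (\sum_i u i * loss n.+1 i - loss n.+1 istar).
Proof.
move=> hK hb; rewrite /lb_round_regret /lb_expect_from.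
rewrite (eq_bigr (fun h : n.+1.-tuple 'I_K =>
  lb_prob eta loss h * excess_loss u (1 + n) (tnth h ord_max)
  + lb_prob eta loss h * (\sum_i u i * loss n.+1 i - loss n.+1 istar))).
  rewrite big_split /= -mulr_suml /lb_prob.
  by rewrite (lb_prob_from_sum1 heta (lb_init_pos_distr R hK) hb) mul1r.
by move=> h _; rewrite /excess_loss add1n -mulrDr addrA subrK.
Qed.

End Regret.

Section MixComparator.
Variables (R : realType) (K T : nat) (istar : 'I_K).
Hypotheses (hK : (0 < K)%N) (hT : (0 < T)%N).

(* Trading [e_{istar}] for this interior point costs at most [2/T] per round,
   while its entries [>= 1/(K T)] keep the initial potential gap below [K ln T]. *)
Definition mix_comparator : 'I_K -> R :=
  fun i => (if i == istar then 1 - T%:R^-1 else 0) + (K%:R * T%:R)^-1.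

Let K0 : 0 < K%:R :> R. Proof. by rewrite ltr0n. Qed.
Let T0 : 0 < T%:R :> R. Proof. by rewrite ltr0n. Qed.
Let invT_le1 : T%:R^-1 <= 1 :> R. Proof. by rewrite invf_le1 // ler1n. Qed.
Let invKT_gt0 : 0 < (K%:R * T%:R)^-1 :> R. Proof. by rewrite invr_gt0 mulr_gt0. Qed.
Let invKT_mulK : (K%:R * T%:R)^-1 * K%:R = T%:R^-1 :> R.
Proof. by rewrite invfM mulrAC mulVf ?lt0r_neq0 // mul1r. Qed.

Lemma mix_comparator_pos_distr : pos_distr mix_comparator.
Proof.
split=> [i|].
  have := invKT_gt0; have := invT_le1.
  by rewrite /mix_comparator; case: eqP => _; lra.
rewrite big_split /= sumr_const card_ord -[_ *+ K]mulr_natr invKT_mulK.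
rewrite (bigD1 istar) //= eqxx big1 ?addr0 ?subrK // => i /negbTE.
by rewrite eq_sym => ->.
Qed.

Lemma mix_comparator_loss_le (l : 'I_K -> R) : (forall i, -1 <= l i <= 1) ->
  \sum_i mix_comparator i * l i - l istar <= 2 / T%:R.
Proof.
move=> hl; rewrite /mix_comparator; under eq_bigr do rewrite mulrDl.
rewrite big_split /= (bigD1 istar) //= eqxx big1 ?addr0; last first.
  by move=> i /negbTE ->; rewrite mul0r.
have hs : (K%:R * T%:R)^-1 * \sum_i l i <= T%:R^-1.
  rewrite -invKT_mulK ler_pM2l //.
  apply: le_trans (ler_sum _ (fun i _ => (andP (hl i)).2)) _.
  by rewrite sumr_const card_ord.
have := hl istar; have : 0 <= T%:R^-1 :> R by rewrite invr_ge0 ltW.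
rewrite -mulr_sumr; nra.
Qed.

Lemma barrier_init_mix_comparator_le :
  barrier mix_comparator (@lb_init R K) - \sum_i (1 + ln (mix_comparator i))
    <= K%:R * ln T%:R.
Proof.
have [up su] := mix_comparator_pos_distr.
rewrite /barrier -sumrB.
apply: (le_trans (y := \sum_i (K%:R * mix_comparator i - 1 + ln T%:R))).
  apply: ler_sum => i _; rewrite /lb_init invrK.
  suff : ln K%:R^-1 <= ln T%:R + ln (mix_comparator i) by lra.
  rewrite -lnM ?posrE // ler_ln ?posrE ?invr_gt0 ?mulr_gt0 //.
  apply: (le_trans (y := T%:R * (K%:R * T%:R)^-1)).
    by rewrite invfM mulrCA mulfV ?lt0r_neq0 // mulr1.
  rewrite ler_pM2l // /mix_comparator lerDr.
  by have := invT_le1; case: eqP => _ //; lra.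
rewrite big_split /= sumrB -mulr_sumr su !sumr_const !card_ord mulr1 subrr.
by rewrite add0r mulr_natl.
Qed.

End MixComparator.

Unset Implicit Arguments. Set Strict Implicit.

Theorem mainTheorem2 (R : realType) (K : nat) (hK : (0 < K)%N)
  (eta : R) (heta0 : 0 < eta) (heta1 : eta < 1)
  (T : nat) (hT : (1 <= T)%N) (loss : nat -> 'I_K -> R)
  (hloss : forall t : nat, (1 <= t <= T)%N -> forall i : 'I_K,
      -1 <= loss t i <= 1) :
  (forall t : nat, (1 <= t <= T)%N -> forall h : (t.-1).-tuple 'I_K,
      (forall i : 'I_K, 0 < lb_pi eta loss h i) /\
      \sum_(i < K) lb_pi eta loss h i = 1) /\
  (forall istar : 'I_K,
      lb_expected_regret eta loss T istar
      <= 2 + K%:R * ln (T%:R) / eta + 2 * eta * T%:R / (1 - eta)).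
Proof.
have he : 0 < eta < 1 by apply/andP.
have init := lb_init_pos_distr R hK.
have hb : bounded_losses loss 1 T by move=> t /andP[t1 tT]; apply: hloss; rewrite t1.
split=> [t /andP[t1 tT] h|istar].
  have sh : (size h <= T)%N by rewrite size_tuple (leq_trans (leq_pred t)).
  by have [] := lb_pi_from_pos_distr he init (bounded_losses_le sh hb).
have ud := mix_comparator_pos_distr R istar hK hT.
rewrite /lb_expected_regret.
under eq_bigr => n _ do rewrite (lb_round_regretE he (mix_comparator R T istar)
  istar hK (bounded_losses_le (ltn_ord n) hb)).
rewrite big_split /=.
have hexp := lb_expect_excess_loss_le he ud init hb.
have hbar := barrier_init_mix_comparator_le R istar hK hT.
have ie : 0 < eta^-1 by rewrite invr_gt0.
rewrite -(ler_pM2r ie) in hbar.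
have hcmp : \sum_(n < T) (\sum_i mix_comparator R T istar i * loss n.+1 i
    - loss n.+1 istar) <= 2.
  apply: le_trans (ler_sum _ (fun (n : 'I_T) _ => mix_comparator_loss_le istar hK hT
    (fun i => hloss n.+1 (ltn_ord n) i))) _.
  by rewrite sumr_const card_ord -[_ *+ T]mulr_natr divfK ?lt0r_neq0 ?ltr0n.
rewrite (_ : 2 * eta * T%:R / (1 - eta) = T%:R * (2 * eta / (1 - eta))); last by ring.
lra.
Qed.
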